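(* Let $n\ge 3$ and let $A$ be the matrix obtained from $V_n$ by replacing the entries $a_{ij}$ for a nonempty set of positions $(i,j)$ with $2\le i\le j\le n-1$ by $t$. Viewing $\det A$ as a polynomial in the indeterminates $s$ and $t$, the coefficient of the monomial $s^{n-3}t^3$ in $\det A$ is nonzero.
   Context: $V_n$ is the $n\times n$ matrix $(a_{ij})$ with: $a_{1j}=t$ for $1\le j\le n-1$ and $a_{1n}=0$; $a_{i+1,i}=s$ for $1\le i\le n-1$; $a_{ij}=0$ for $i>j+1$; $a_{ij}=0$ for $2\le i\le j\le n-1$; and $a_{in}=t$ for $2\le i\le n$. Every entry of $V_n$ and of $A$ is $0$, $s$ or $t$, so $\det A$ is a polynomial in $s,t$ with integer coefficients. *)

From mathcomp Require Import all_boot all_order all_algebra.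
Set Implicit Arguments. Unset Strict Implicit. Unset Printing Implicit Defensive.
Import GRing.Theory.
Local Open Scope ring_scope.

(* Indices are 0-based: paper's (i,j) corresponds to ('I_n) (i-1, j-1). *)
Definition Vmx (R : pzRingType) (n : nat) (s t : R) : 'M[R]_n :=
  \matrix_(i < n, j < n)
    if (i == 0%N :> nat) then (if (j < n.-1)%N then t else 0)
    else if (j == n.-1 :> nat) then t
    else if (i == j.+1 :> nat) then s
    else 0.

Definition Amx (R : pzRingType) (n : nat) (s t : R) (S : {set 'I_n * 'I_n})
  : 'M[R]_n :=
  \matrix_(i < n, j < n) if (i, j) \in S then t else @Vmx R n s t i j.

(* Bivariate integer polynomials: {poly {poly int}}; the outer variable is t,
   the inner variable is s. *)
Definition var_s : {poly {poly int}} := ('X)%:P.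
Definition var_t : {poly {poly int}} := 'X.

(* Every entry of A is 0, s or t, and s sits exactly on the subdiagonal
   positions (i+1, i).  So a permutation sigma contributes to s^(n-3) t^3 iff
   sigma followed by the cyclic shift i |-> i+1 moves exactly three points;
   such a permutation is a 3-cycle, hence even, and all these contributions
   carry the sign of the shift: they cannot cancel.  One contribution exists:
   for (i0, j0) in S, the 3-cycle (0 i0 j0+1) picks t in the rows 0, i0, j0+1
   and s in all other rows. *)

From mathcomp Require Import all_boot all_order all_algebra fingroup perm zify.
Set Implicit Arguments. Unset Strict Implicit. Unset Printing Implicit Defensive.
Import GRing.Theory Num.Theory.
Local Open Scope ring_scope.

Section PermSupport.
Variable T : finType.
Implicit Types (p : {perm T}) (D : {set T}).

Lemma perm_on_mul_tperm D p a : perm_on D p -> a \in D ->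
  perm_on (D :\ a) (p * tperm a (p a))%g.
Proof.
move=> pD aD; apply/subsetP => x; rewrite inE permM !inE.
have [->|xa] := eqVneq x a; first by rewrite tpermR eqxx.
apply: contraR => xD; rewrite (out_perm pD xD) tpermD // eq_sym //.
by apply: contraNneq xD => ->; rewrite perm_closed.
Qed.

Lemma odd_perm_support3 p : #|[set x | p x != x]| = 3 -> odd_perm p = false.
Proof.
move=> D3; set D := [set x | p x != x] in D3 *.
have pD : perm_on D p by apply/subsetP => x; rewrite !inE.
have [a aD] : exists a, a \in D by apply/card_gt0P; rewrite D3.
have paD : a != p a by move: aD; rewrite inE eq_sym.
set r := (p * tperm a (p a))%g.
have rDa : perm_on (D :\ a) r by exact: perm_on_mul_tperm.
have p_r : p = (r * tperm a (p a))%g by rewrite -mulgA tperm2 mulg1.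
have [b rb] : exists b, r b != b.
  apply/existsP; apply: contraT => /existsPn r1.
  have p_t : p = tperm a (p a).
    rewrite {1}p_r (_ : r = 1%g) ?mul1g //.
    by apply/permP => x; rewrite perm1; apply/eqP/negPn/r1.
  have : D \subset [set a; p a].
    apply/subsetP => x; rewrite inE => x_moved.
    by apply: (subsetP (tperm_on a (p a))); rewrite inE /= -p_t.
  by move/subset_leq_card; rewrite cards2 paD D3.
have rbD : b \in D :\ a by apply: (subsetP rDa); rewrite inE.
have r_t : r = tperm b (r b).
  have r1 : (r * tperm b (r b))%g = 1%g.
    apply: (perm_on_id (perm_on_mul_tperm rDa rbD)).
    by have := cardsD1 a D; have := cardsD1 b (D :\ a); rewrite aD rbD D3; lia.
  by rewrite -[LHS]mulg1 -(tperm2 b (r b)) mulgA r1 mul1g.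
by rewrite p_r r_t odd_permM !odd_tperm eq_sym rb paD.
Qed.

End PermSupport.

Section Cycle3.
Variables (T : finType) (a b c : T).
Hypotheses (ab : a != b) (ac : a != c) (bc : b != c).

Lemma tperm_cycle3E x : (tperm a b * tperm a c)%g x =
  if x == a then b else if x == b then c else if x == c then a else x.
Proof.
rewrite permM; have [->|xa] := eqVneq x a; first by rewrite tpermL tpermD // eq_sym.
have [->|xb] := eqVneq x b; first by rewrite tpermR tpermL.
rewrite (@tpermD _ a b x) 1?eq_sym //.
have [->|xc] := eqVneq x c; first by rewrite tpermR.
by rewrite tpermD 1?eq_sym.
Qed.

Lemma card_support_cycle3 : #|[set x | (tperm a b * tperm a c)%g x != x]| = 3.
Proof.
have -> : [set x | (tperm a b * tperm a c)%g x != x] = [set a; b; c].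
  apply/setP => x; rewrite !inE tperm_cycle3E.
  have [->|xa] := eqVneq x a; first by rewrite eq_sym ab.
  have [->|xb] := eqVneq x b; first by rewrite eq_sym bc.
  by have [->|] := eqVneq x c; rewrite ?eqxx // ac.
by rewrite -setUA cardsU1 cards2 !inE negb_or ab ac bc.
Qed.
End Cycle3.

Lemma var_s_neq0 : var_s != 0.
Proof. by rewrite polyC_eq0 polyX_eq0. Qed.

Lemma var_t_neq0 : var_t != 0.
Proof. by rewrite polyX_eq0. Qed.

Lemma var_s_neq_t : var_s != var_t.
Proof.
by apply/eqP => /(congr1 (coefp 1)) /eqP; rewrite /= coefC coefX eq_sym oner_eq0.
Qed.

Lemma coef_var_t_s a b k l :
  ((var_t ^+ a * var_s ^+ b)`_k)`_l = ((a == k) && (b == l))%:R.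
Proof.
rewrite -rmorphXn mulrC coefCM coefXn mulr_natr coefMn coefXn -mulrnA mulnb.
by rewrite andbC !(eq_sym _ k) (eq_sym l).
Qed.

Lemma coef_prod_var_st (I : finType) (F : I -> {poly {poly int}}) k l :
  (k + l = #|I|)%N -> (forall i, F i \in [:: 0; var_s; var_t]) ->
  ((\prod_i F i)`_k)`_l =
    ([forall i, F i != 0] && (#|[pred i | F i == var_t]| == k))%:R.
Proof.
move=> kl_I F_st; have [F_nz /=|] := boolP [forall i, F i != 0]; last first.
  by case/forallPn => i /negPn/eqP Fi0; rewrite (bigD1 i) //= Fi0 mul0r !coef0.
rewrite (bigID [pred i | F i == var_t]) /=.
rewrite (eq_bigr (fun=> var_t)) => [|i /eqP //]; rewrite prodr_const.
rewrite (eq_bigr (fun=> var_s)) => [|i]; last first.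
  have := F_st i; rewrite !inE (negPf (forallP F_nz i)) /=.
  by case/orP => /eqP ->; rewrite ?eqxx.
rewrite prodr_const coef_var_t_s; have := cardC [pred i | F i == var_t].
by rewrite -kl_I; case: eqP => [-> /addnI -> | ]; rewrite ?eqxx.
Qed.

Definition upper_interior n (S : {set 'I_n * 'I_n}) :=
  forall p, p \in S -> [/\ (1 <= p.1)%N, (p.1 <= p.2)%N & (p.2 <= n - 2)%N].

Section AmxEntries.
Variables (R : pzRingType) (n : nat) (s t : R) (S : {set 'I_n * 'I_n}).
Hypothesis S_upper : upper_interior S.
Local Notation A := (Amx s t S).

Lemma Amx_entry i j : A i j \in [:: 0; s; t].
Proof. by rewrite !mxE; do !case: ifP => _; rewrite !inE eqxx ?orbT. Qed.

Lemma Amx_eq_s i j : s != 0 -> s != t -> (A i j == s) = (i == j.+1 :> nat).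
Proof.
move=> s0 st; have := ltn_ord i; have := ltn_ord j; have := @S_upper (i, j).
rewrite !mxE /=.
case: ((i, j) \in S) => [/(_ isT) [] | _ _]; first by rewrite eq_sym (negPf st); lia.
have [-> | _] := eqVneq (nat_of_ord i) 0%N.
  by case: ifP; rewrite eq_sym ?(negPf st) ?(negPf s0).
have [-> | _] := eqVneq (nat_of_ord j) n.-1; first by rewrite eq_sym (negPf st); lia.
by have [_|_] := eqVneq (nat_of_ord i) j.+1; rewrite ?eqxx // eq_sym (negPf s0).
Qed.

Lemma Amx_top_right i j : nat_of_ord i = 0%N -> nat_of_ord j = n.-1 -> A i j = 0.
Proof.
move=> i0 jn; rewrite !mxE i0 jn ltnn /=.
by case: ifP => // /S_upper [] /=; rewrite i0.
Qed.

Lemma Amx_eq_t i j : s != 0 -> s != t -> A i j != 0 ->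
  (A i j == t) = (ordS j != i).
Proof.
move=> s0 st Aij0; have -> : (A i j == t) = (A i j != s).
  have := Amx_entry i j; rewrite !inE (negPf Aij0) orFb.
  by case/orP => /eqP ->; rewrite eqxx ?(negPf st) // eq_sym.
rewrite Amx_eq_s // -val_eqE /=; have [jn | jn] := eqVneq j.+1 n.
  have -> : (i == j.+1 :> nat) = false.
    by apply/negbTE/eqP => ij; have := ltn_ord i; rewrite ij jn ltnn.
  rewrite jn modnn; apply/esym; apply: contraNneq Aij0 => i0.
  by rewrite Amx_top_right //; move/(congr1 predn): jn.
by rewrite modn_small 1?eq_sym // ltn_neqAle jn ltn_ord.
Qed.
(* [ordS j == 0] says that j is the last column; together with [i != 0],
   [ordS j == i] says that (i, j) lies on the subdiagonal. *)
Lemma Amx_neq0 i j : s != 0 -> t != 0 ->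
  [|| (i, j) \in S, (i == 0 :> nat) != (ordS j == 0 :> nat)
    | (i != 0 :> nat) && (ordS j == i)] ->
  A i j != 0.
Proof.
move=> s0 t0; rewrite !mxE -val_eqE /=; have := ltn_ord i; have := ltn_ord j.
case: ((i, j) \in S) => //=.
have [jn|jn] := eqVneq j.+1 n.
  by rewrite jn modnn; do ![case: ifP] => //= *; lia.
rewrite modn_small; last by rewrite ltn_neqAle jn ltn_ord.
by do ![case: ifP] => //= *; lia.
Qed.
End AmxEntries.

Definition shift n : {perm 'I_n} := perm (@ordS_inj n).

Lemma shiftE n (i : 'I_n) : shift n i = ordS i.
Proof. by rewrite permE. Qed.

Lemma coef2_signM (p : {poly {poly int}}) (b : bool) k l :
  (((-1) ^+ b * p)`_k)`_l = (-1) ^+ b * (p`_k)`_l.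
Proof. by case: b; rewrite ?mul1r ?mulN1r ?coefN. Qed.

Section LeibnizTerms.
Variables (n : nat) (S : {set 'I_n * 'I_n}).
Hypothesis S_upper : upper_interior S.
Local Notation A := (Amx var_s var_t S).

Definition s_t3_term (sigma : 'S_n) :=
  [forall i, A i (sigma i) != 0] && (#|[pred i | A i (sigma i) == var_t]| == 3).

Lemma t_entries_support (sigma : 'S_n) : (forall i, A i (sigma i) != 0) ->
  [pred i | A i (sigma i) == var_t] =i [set i | (sigma * shift n)%g i != i].
Proof.
by move=> nz i; rewrite !inE /= Amx_eq_t ?permM ?shiftE // ?var_s_neq0 ?var_s_neq_t.
Qed.

Lemma odd_perm_s_t3_term sigma :
  s_t3_term sigma -> odd_perm sigma = odd_perm (shift n).
Proof.
case/andP => /forallP nz /eqP t3.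
have : odd_perm (sigma * shift n)%g = false.
  by apply: odd_perm_support3; rewrite -t3; apply/esym/eq_card/t_entries_support.
by rewrite odd_permM; case: (odd_perm sigma); case: (odd_perm (shift n)).
Qed.

Lemma exists_s_t3_term : (3 <= n)%N -> S != set0 -> exists sigma, s_t3_term sigma.
Proof.
move=> n3 /set0Pn [[i0 j0] Sij].
have [/= i0_gt0 le_i0j0 j0_small] := S_upper Sij.
pose z : 'I_n := Ordinal (leq_trans (isT : 0 < 3)%N n3).
pose r := ordS j0.
have r_val : nat_of_ord r = j0.+1 by rewrite /= modn_small //; lia.
have z_i0 : z != i0 by rewrite -val_eqE /= eq_sym -lt0n.
have z_r : z != r by rewrite -(inj_eq (@ord_inj n)) r_val.
have i0_r : i0 != r by rewrite -(inj_eq (@ord_inj n)) r_val neq_ltn ltnS le_i0j0.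
pose q := (tperm z i0 * tperm z r)%g.
pose sigma := (q * (shift n)^-1)%g.
have sigma_shift : (sigma * shift n)%g = q by rewrite mulgKV.
have sigma_i0 : sigma i0 = j0.
  apply: ordS_inj; rewrite -shiftE -permM sigma_shift tperm_cycle3E //.
  by rewrite eq_sym (negPf z_i0) eqxx.
have nz i : A i (sigma i) != 0.
  apply: Amx_neq0; rewrite ?var_s_neq0 ?var_t_neq0 //.
  have [-> | ii0] := eqVneq i i0; first by rewrite sigma_i0 Sij.
  rewrite -shiftE -permM sigma_shift tperm_cycle3E // (negPf ii0).
  have [-> | iz] := eqVneq i z; first by rewrite /= -lt0n i0_gt0 orbT.
  have [-> | ir] := eqVneq i r; first by rewrite r_val /= orbT.
  have i_gt0 : nat_of_ord i != 0%N.
    by apply: contraNneq iz => i_0; apply/eqP/ord_inj.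
  by rewrite !eqxx i_gt0 !orbT.
exists sigma; apply/andP; split; first exact/forallP.
by rewrite (eq_card (t_entries_support nz)) sigma_shift card_support_cycle3.
Qed.

Lemma coef_term_s_t3 (sigma : 'S_n) : (3 <= n)%N ->
  (((-1) ^+ sigma * \prod_i A i (sigma i))`_3)`_(n - 3) =
    if s_t3_term sigma then (-1) ^+ shift n else 0.
Proof.
move=> n3; rewrite coef2_signM coef_prod_var_st ?card_ord ?subnKC // => [|i].
  rewrite -/(s_t3_term sigma).
  by case: ifP => [/odd_perm_s_t3_term -> | _]; rewrite ?mulr1 ?mulr0.
exact: Amx_entry.
Qed.

End LeibnizTerms.

Theorem proposition5p7 (n : nat) (S : {set 'I_n * 'I_n}) :
  (3 <= n)%N ->
  S != set0 ->
  (forall p, p \in S -> [/\ (1 <= p.1)%N, (p.1 <= p.2)%N & (p.2 <= n - 2)%N]) ->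
  ((\det (@Amx _ n var_s var_t S))`_3)`_(n - 3) != 0.
Proof.
move=> n3 S_nonempty S_upper.
rewrite /determinant !coef_sum.
rewrite (eq_bigr _ (fun sigma _ => coef_term_s_t3 S_upper sigma n3)).
rewrite -big_mkcond sumr_const mulrn_eq0 negb_or signr_eq0 andbT -lt0n.
have [sigma sigma_s_t3] := exists_s_t3_term S_upper n3 S_nonempty.
by apply/card_gt0P; exists sigma.
Qed.
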